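(* Let $P\subset\mathbb R^d$ be a rational $d$-polytope, and let $\Delta_P$ be the decomposition of $\mathbb R^d$ into open cells determined by the arrangement $\mathcal A_P$ (defined in the context). Let $\bm u,\bm v\in\mathbb R^d$. If there is $\bm w\in\mathbb Z^d$ such that $\bm u$ and $\bm v+\bm w$ lie in the same open cell of $\Delta_P$ (i.e. $[\bm u]$ and $[\bm v]$ lie in the same cell of $\Delta_P/\mathbb Z^d$), then $\mathrm{TL}_{P,\bm u}(t)=\mathrm{TL}_{P,\bm v}(t)$ for all $t\in\mathbb Z_{\ge 0}$.
   Context: For $\bm a\in\mathbb R^d$, $b\in\mathbb R$, let $H_{\bm a,b}=\{\bm x:(\bm a,\bm x)=b\}$ and $H^{\ge}_{\bm a,b}=\{\bm x:(\bm a,\bm x)\ge b\}$, where $(\cdot,\cdot)$ is the standard inner product. A rational $d$-polytope $P\subset\mathbb R^d$ has a unique irredundant presentation $P=H^{\ge}_{\bm a_1,b_1}\cap\cdots\cap H^{\ge}_{\bm a_m,b_m}$ with each $(\bm a_i,b_i)\in\mathbb Z^{d+1}$ primitive (gcd of entries is 1); $N(P)=\{\bm a_1,\dots,\bm a_m\}$. The arrangement is $\mathcal A_P=\{H_{\bm a_i,k}: 1\le i\le m,\ k\in\mathbb Z\}$. The open cells of $\Delta_P$ are the nonempty sets $A_1\cap\cdots\cap A_m$ where each $A_i$ is either $H_{\bm a_i,k}$ or $\{\bm x: k<(\bm a_i,\bm x)<k+1\}$ for some $k\in\mathbb Z$. $[\bm v]$ denotes the image of $\bm v$ in $\mathbb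 R^d/\mathbb Z^d$; $\Delta_P/\mathbb Z^d$ is the induced cell decomposition of the torus. For a convex set $X\subset\mathbb R^d$ and $\bm v\in\mathbb R^d$, the translated lattice points enumerator is $\mathrm{TL}_{X,\bm v}(t)=\#((tX+\bm v)\cap\mathbb Z^d)$ for $t\in\mathbb Z_{\ge0}$. *)

From HB Require Import structures.
From mathcomp Require Import all_boot all_order all_algebra.
From mathcomp Require Import boolp classical_sets fsbigop reals.
Set Implicit Arguments. Unset Strict Implicit. Unset Printing Implicit Defensive.
Import Order.TTheory GRing.Theory Num.Theory.
Local Open Scope ring_scope.
Local Open Scope classical_set_scope.

Section Defs.
Variables (R : realType) (d m : nat).

Definition dotZ (a : 'rV[int]_d) (x : 'rV[R]_d) : R :=
  \sum_(j < d) (a ord0 j)%:~R * x ord0 j.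

Definition intvec (z : 'rV[int]_d) : 'rV[R]_d := map_mx (fun k : int => k%:~R) z.

Definition Pset (a : 'I_m -> 'rV[int]_d) (b : 'I_m -> int) : set 'rV[R]_d :=
  [set x | forall i, (b i)%:~R <= dotZ (a i) x].

Definition primitive (a : 'rV[int]_d) (b : int) : Prop :=
  foldr gcdz b [seq a ord0 j | j <- enum 'I_d] = 1.

Definition irredundant (a : 'I_m -> 'rV[int]_d) (b : 'I_m -> int) : Prop :=
  forall i, exists x : 'rV[R]_d,
    (forall j, j != i -> (b j)%:~R <= dotZ (a j) x) /\ dotZ (a i) x < (b i)%:~R.

(* P is a d-polytope: bounded, with nonempty interior in R^d *)
Definition is_dpolytope (a : 'I_m -> 'rV[int]_d) (b : 'I_m -> int) : Prop :=
  (exists M : R, forall x, Pset a b x -> forall j, `|x ord0 j| <= M) /\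
  (exists x : 'rV[R]_d, forall i, (b i)%:~R < dotZ (a i) x).

Definition cell_piece (ai : 'rV[int]_d) (k : int) (open : bool) : set 'rV[R]_d :=
  if open then [set x | k%:~R < dotZ ai x < (k + 1)%:~R]
  else [set x | dotZ ai x = k%:~R].

(* x and y lie in the same open cell A_1 /\ ... /\ A_m of Delta_P *)
Definition same_cell (a : 'I_m -> 'rV[int]_d) (x y : 'rV[R]_d) : Prop :=
  exists (k : 'I_m -> int) (o : 'I_m -> bool),
    forall i, cell_piece (a i) (k i) (o i) x /\ cell_piece (a i) (k i) (o i) y.

Definition TLset (a : 'I_m -> 'rV[int]_d) (b : 'I_m -> int) (v : 'rV[R]_d)
  (t : nat) : set 'rV[int]_d :=
  [set z | exists p, Pset a b p /\ intvec z = t%:R *: p + v].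

(* TL_{P,v}(t) = #((tP + v) /\ Z^d)  (finite since P is bounded) *)
Definition TL (a : 'I_m -> 'rV[int]_d) (b : 'I_m -> int) (v : 'rV[R]_d)
  (t : nat) : nat :=
  (\sum_(z \in TLset a b v t) 1)%N.

End Defs.

From HB Require Import structures.
From mathcomp Require Import all_boot all_order all_algebra.
From mathcomp Require Import boolp classical_sets fsbigop reals.
From mathcomp Require Import zify ring lra.
Set Implicit Arguments. Unset Strict Implicit. Unset Printing Implicit Defensive.
Import Order.TTheory GRing.Theory Num.Theory.
Local Open Scope ring_scope.
Local Open Scope classical_set_scope.

(* Write P = {x | (a_i, x) >= b_i for all i}.  For t > 0 an
   integer vector z lies in tP + u iff (a_i, z) >= t b_i + (a_i, u) for all i.
   Since (a_i, z) - t b_i is an integer n, this says (a_i, u) <= n, and whether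
   a real number lies below a given integer only depends on the piece
   (integer level or open unit strip) containing it; hence it only depends on
   the open cell of u.  So same-cell points u, u' give the same set of lattice
   points in tP + u and tP + u'.  For t = 0 the set (0P + u) /\ Z^d is nonempty
   only if u is integral; since P is bounded and nonempty, the normals a_i span
   R^d, so the cell of an integral point is that point alone and again both
   sets agree.  Finally, translating by w in Z^d shifts the lattice points of
   tP + v bijectively onto those of tP + v + w, so the counts coincide. *)

Section LinearForm.
Variables (R : realType) (d : nat).
Implicit Types (x y : 'rV[R]_d) (ai : 'rV[int]_d) (z w : 'rV[int]_d).

Lemma dotZD ai x y : dotZ ai (x + y) = dotZ ai x + dotZ ai y.
Proof. by rewrite /dotZ -big_split /=; apply: eq_bigr => j _; rewrite mxE mulrDr. Qed.

Lemma dotZZ ai c x : dotZ ai (c *: x) = c * dotZ ai x.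
Proof. by rewrite /dotZ mulr_sumr; apply: eq_bigr => j _; rewrite mxE mulrCA. Qed.

Lemma dotZN ai x : dotZ ai (- x) = - dotZ ai x.
Proof. by rewrite -scaleN1r dotZZ mulN1r. Qed.

Lemma dotZ_intvec ai z : exists n : int, dotZ ai (intvec R z) = n%:~R.
Proof.
exists (\sum_(j < d) ai ord0 j * z ord0 j); rewrite /dotZ rmorph_sum.
by apply: eq_bigr => j _; rewrite /intvec mxE rmorphM.
Qed.

Lemma intvecD z w : intvec R (z + w) = intvec R z + intvec R w.
Proof. by apply/matrixP => i j; rewrite !mxE rmorphD. Qed.

Lemma intvecB z w : intvec R (z - w) = intvec R z - intvec R w.
Proof. by apply/matrixP => i j; rewrite !mxE rmorphB. Qed.

(* Being below an integer level n is constant on each piece A_i of a cell: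
   either the piece is a level set, or it is an open strip (k, k+1), which
   lies entirely below n as soon as one of its points does. *)
Lemma cell_piece_le ai k o x y (n : int) :
  cell_piece ai k o x -> cell_piece ai k o y ->
  dotZ ai x <= n%:~R -> dotZ ai y <= n%:~R.
Proof.
case: o => /=; last by move=> -> ->.
move=> /andP[kx _] /andP[_ yk1] xn.
have kn : (k < n)%R by rewrite -(ltr_int R); apply: lt_le_trans xn.
have k1n : (k + 1)%:~R <= (n%:~R : R) by rewrite ler_int; lia.
exact/ltW/(lt_le_trans yk1 k1n).
Qed.

End LinearForm.

Section SameCell.
Variables (R : realType) (d m : nat) (a : 'I_m -> 'rV[int]_d).
Implicit Types (x y : 'rV[R]_d).

Lemma same_cell_sym x y : same_cell a x y -> same_cell a y x.
Proof. by move=> [k [o H]]; exists k, o => i; have [? ?] := H i. Qed.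

Lemma same_cell_le x y i (n : int) : same_cell a x y ->
  dotZ (a i) x <= n%:~R -> dotZ (a i) y <= n%:~R.
Proof. by move=> [k [o H]]; have [hx hy] := H i; apply: cell_piece_le hx hy. Qed.

(* If the forms (a_i, .) only vanish simultaneously at 0, then a cell
   containing an integral point consists of that point alone: the point lies
   on integer levels of every form, so each piece of its cell is a level set. *)
Lemma integral_cell_point x y (z : 'rV[int]_d) :
  (forall y0, (forall i, dotZ (a i) y0 = 0) -> y0 = 0) ->
  same_cell a x y -> intvec R z = x -> y = x.
Proof.
move=> forms_separate [k [o H]] zx; apply/eqP; rewrite -subr_eq0; apply/eqP.
apply: forms_separate => i; rewrite dotZD dotZN.
have [n hn] := dotZ_intvec R (a i) z; rewrite zx in hn.
have [hx hy] := H i; move: hx hy; case: (o i) => /=.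
  by move=> /andP[]; rewrite hn !ltr_int => kn nk1; lia.
by move=> -> ->; rewrite subrr.
Qed.

End SameCell.

Section LatticePoints.
Variables (R : realType) (d m : nat) (a : 'I_m -> 'rV[int]_d) (b : 'I_m -> int).
Implicit Types (x y u : 'rV[R]_d).

(* If P is bounded and nonempty, the normals a_i span R^d: otherwise P would
   contain a whole line x0 + R y. *)
Lemma normals_span (M : R) (x0 : 'rV[R]_d) :
  (forall x, Pset a b x -> forall j, `|x ord0 j| <= M) -> Pset a b x0 ->
  forall y, (forall i, dotZ (a i) y = 0) -> y = 0.
Proof.
move=> bounded Px0 y ay0; apply/rowP => j; rewrite mxE.
apply/eqP; apply/negPn/negP => yj.
pose s := (M + `|x0 ord0 j| + 1) / y ord0 j.
have Pline : Pset a b (x0 + s *: y).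
  by move=> i; rewrite dotZD dotZZ ay0 mulr0 addr0; apply: Px0.
move: (bounded _ Pline j); rewrite !mxE /s divfK //.
have h1 := ler_norm (- x0 ord0 j); rewrite normrN in h1.
have h2 := ler_norm (x0 ord0 j + (M + `|x0 ord0 j| + 1)).
lra.
Qed.

Lemma TLset_dilate u (t : nat) z : (0 < t)%N ->
  TLset a b u t z <->
  forall i, (b i)%:~R * t%:R + dotZ (a i) u <= dotZ (a i) (intvec R z).
Proof.
move=> t0; have tR : (0 : R) < t%:R by rewrite ltr0n.
split.
  move=> [p [Pp ->]] i; rewrite dotZD dotZZ lerD2r mulrC.
  by rewrite ler_pM2l //; apply: Pp.
move=> H; exists (t%:R^-1 *: (intvec R z - u)); split.
  move=> i; rewrite /= dotZZ dotZD dotZN ler_pdivlMl //; have := H i; lra.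
by rewrite scalerA mulfV ?gt_eqF // scale1r subrK.
Qed.

(* Case t > 0: each translated inequality says that (a_i, u) lies below an
   integer level, which only depends on the cell of u. *)
Lemma TLset_same_cell_pos x y (t : nat) : (0 < t)%N -> same_cell a x y ->
  TLset a b x t `<=` TLset a b y t.
Proof.
move=> t0 sc z /(TLset_dilate _ _ t0) Hx; apply/(TLset_dilate _ _ t0) => i.
have [n hn] := dotZ_intvec R (a i) z.
have tZ : (t%:Z)%:~R = t%:R :> R by [].
have : dotZ (a i) x <= (n - b i * t%:Z)%:~R.
  by rewrite rmorphB rmorphM /= -hn tZ; have := Hx i; lra.
by move/(same_cell_le sc); rewrite rmorphB rmorphM /= -hn tZ; lra.
Qed.

(* Case t = 0: the only candidate lattice point is u itself, and an
   integral u is alone in its cell. *)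
Lemma TLset_same_cell_zero x y : is_dpolytope R a b -> same_cell a x y ->
  TLset a b x 0 `<=` TLset a b y 0.
Proof.
move=> [[M bounded] [x0 Hx0]] sc z [p [Pp zx]].
rewrite scale0r add0r in zx.
have Px0 : Pset a b x0 by move=> i; apply/ltW/Hx0.
rewrite (integral_cell_point (normals_span bounded Px0) sc zx).
by exists p; rewrite scale0r add0r.
Qed.

Lemma TLset_same_cell x y (t : nat) : is_dpolytope R a b -> same_cell a x y ->
  TLset a b x t = TLset a b y t.
Proof.
move=> hP sc; have sc' := same_cell_sym sc.
apply/seteqP; split; case: t => [|t].
- exact: TLset_same_cell_zero.
- exact: TLset_same_cell_pos.
- exact: TLset_same_cell_zero.
- exact: TLset_same_cell_pos.
Qed.

Lemma TLset_shift u (w : 'rV[int]_d) (t : nat) :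
  TLset a b (u + intvec R w) t = (fun z => z + w) @` TLset a b u t.
Proof.
apply/seteqP; split => z /=.
  move=> [p [Pp hz]]; exists (z - w); last by rewrite subrK.
  by exists p; split => //; rewrite intvecB hz addrA addrK.
move=> [z' [p [Pp hz]] <-]; exists p; split => //.
by rewrite intvecD hz addrA.
Qed.

End LatticePoints.

Theorem theorem1p2 (R : realType) (d m : nat)
  (a : 'I_m -> 'rV[int]_d) (b : 'I_m -> int) :
  (forall i, primitive (a i) (b i)) ->
  irredundant R a b ->
  is_dpolytope R a b ->
  forall u v : 'rV[R]_d,
    (exists w : 'rV[int]_d, same_cell a u (v + intvec R w)) ->
    forall t : nat, TL a b u t = TL a b v t.
Proof.
move=> _ _ hP u v [w sc] t.
rewrite /TL (TLset_same_cell t hP sc) TLset_shift fsbig_image //.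
by move=> z1 z2 _ _ /addIr.
Qed.
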